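(* Let $G=(V,A,w)$ be a weighted weak equilibrium graph. Then the distance between any two rich leaves of $G$ is at most $2$.
   Context: A weighted directed graph $G=(V,A,w)$ has vertex set $V$, arc set $A$ and weight function $w:V\to\mathbb{Z}^+$ (positive integers). $U(G)$ is the undirected multigraph obtained by ignoring arc directions; $\operatorname{dist}(u,v)$ is the distance in $U(G)$, defined to be $|V|^2$ if $u,v$ are in different components. The cost of a vertex $u$ is $c(u)=\sum_{v\in V}w(v)\operatorname{dist}(u,v)$. $G$ is a weak equilibrium graph if for every arc $\overrightarrow{uv}\in A$ and every vertex $x$ with $\overrightarrow{ux}\notin A$ (and $x\ne u$), replacing the arc $\overrightarrow{uv}$ by $\overrightarrow{ux}$ does not decrease the cost of $u$. A leaf is a vertex of degree $1$ in $U(G)$; a rich leaf is a leaf with outdegree one (i.e. it owns its unique incident arc). *)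

From mathcomp Require Import all_boot.
Set Implicit Arguments. Unset Strict Implicit. Unset Printing Implicit Defensive.

(* Both u->v and v->u may be
   present, so the underlying undirected graph U(G) is a multigraph. *)

Section Graphs.
Variable V : finType.
Implicit Types (A : rel V) (u v x : V).

Definition uadj A : rel V := fun a b => A a b || A b a.

Definition walkb A (k : nat) u v : bool :=
  [exists p : k.-tuple V, path (uadj A) u p && (last u p == v)].

(* distance in U(G): length of a shortest walk (any shortest walk has length
   < |V|), and |V|^2 if u and v lie in different components *)
Definition dist A u v : nat :=
  let k := find (fun k => walkb A k u v) (iota 0 #|V|) in
  if k < #|V| then k else #|V| ^ 2.

Definition cost A (w : V -> nat) u : nat := \sum_(y : V) w y * dist A u y.

Definition swap A u v x : rel V :=
  fun a b => (A a b && ((a, b) != (u, v))) || ((a == u) && (b == x)).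

Definition weak_equilibrium A (w : V -> nat) : Prop :=
  forall u v x, A u v -> x != u -> ~~ A u x ->
    cost A w u <= cost (swap A u v x) w u.

Definition outdeg A u : nat := #|[set y | A u y]|.
Definition indeg A u : nat := #|[set y | A y u]|.
Definition deg A u : nat := outdeg A u + indeg A u.

Definition leaf A u : bool := deg A u == 1.
Definition rich_leaf A u : bool := leaf A u && (outdeg A u == 1).

End Graphs.

(* If two rich leaves a and b with neighbours p and q were at distance at least
   3, let a redirect its arc to q and b its arc to p.  A shortest walk from b to
   any other vertex y can be rerouted around a (a leaf only ever returns to
   where it came from), so it leaves b through q; hence after its move a is at
   most as far from y as b was before, and symmetrically.  Moreover a and b end
   up at distance 2 from each other instead of at least 3, so the sum of the
   two costs strictly drops and one of the two moves is an improvement. *)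

From mathcomp Require Import all_boot zify.
Set Implicit Arguments. Unset Strict Implicit.

Section Distances.
Variable V : finType.
Implicit Types (A : rel V) (a b p q u v x y : V).

Lemma uadjC A x y : uadj A x y = uadj A y x.
Proof. by rewrite /uadj orbC. Qed.

Lemma walkbP A k u v :
  reflect (exists s, [/\ size s = k, path (uadj A) u s & last u s = v])
          (walkb A k u v).
Proof.
apply: (iffP existsP) => [[t /andP[pt /eqP lst]] | [s [sz ps ls]]].
  by exists (val t); rewrite size_tuple.
by exists (Tuple (introT eqP sz)); rewrite /= ps ls eqxx.
Qed.

Lemma walkb_sym A k u v : walkb A k u v -> walkb A k v u.
Proof.
case/walkbP=> s [sz ps <-{v}]; apply/walkbP; exists (rev (belast u s)); split.
- by rewrite size_rev size_belast.
- by rewrite rev_path; apply: sub_path ps => x y; rewrite uadjC.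
- by case: s {sz ps} => //= x s; rewrite rev_cons last_rcons.
Qed.

Lemma dist_le_walk A k u v : walkb A k u v -> k < #|V| -> dist A u v <= k.
Proof.
move=> wk ltkV; rewrite /dist.
have has_walk : has (fun k => walkb A k u v) (iota 0 #|V|).
  by apply/hasP; exists k; rewrite ?mem_iota.
have := has_walk; rewrite has_find size_iota => ->; rewrite leqNgt.
by apply/negP => /(before_find 0); rewrite nth_iota // add0n wk.
Qed.

Lemma dist_le_max A u v : dist A u v <= #|V| ^ 2.
Proof.
rewrite /dist; case: ifP => // ltV.
rewrite (leq_trans (ltnW ltV)) // expnS expn1 leq_pmulr //.
exact: leq_ltn_trans ltV.
Qed.

Lemma dist_spec A u v :
  dist A u v = #|V| ^ 2 \/ walkb A (dist A u v) u v /\ dist A u v < #|V|.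
Proof.
rewrite /dist; case: ifP => ltV; [right | by left]; split=> //.
have : has (fun k => walkb A k u v) (iota 0 #|V|) by rewrite has_find size_iota.
by move/(nth_find 0); rewrite nth_iota.
Qed.

Lemma distC A u v : dist A u v = dist A v u.
Proof.
rewrite /dist (@eq_find _ _ (fun k => walkb A k v u)) // => k.
by apply/idP/idP; apply: walkb_sym.
Qed.

Lemma dist_xx A u : dist A u u = 0.
Proof.
apply/eqP; rewrite -leqn0; apply: dist_le_walk; first by apply/walkbP; exists [::].
by apply/card_gt0P; exists u.
Qed.

Lemma rich_leafP A a : rich_leaf A a ->
  exists p, [/\ A a p, p != a & forall x, uadj A a x -> x = p].
Proof.
case/andP=> /eqP deg1 /eqP out1.
have /cards0_eq noin : indeg A a = 0 by move: deg1; rewrite /deg out1; lia.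
have [p outp] := cards1P (introT eqP out1).
have Aax x : A a x = (x == p) by rewrite -in_set1 -outp inE.
have nAxa x : A x a = false.
  by apply/negbTE; have := in_set0 x; rewrite -noin inE => ->.
exists p; split; first by rewrite Aax.
  by apply/eqP => pa; have := Aax p; rewrite eqxx {1}pa nAxa.
by move=> x; rewrite /uadj nAxa orbF Aax => /eqP.
Qed.

Section Leaf.
Variables (A : rel V) (a p : V).
Hypothesis leaf_a : forall x, uadj A a x -> x = p.

(* A walk through the leaf a reads ... p a p ..., and the detour "a p" can be
   cut out. *)
Lemma path_avoid_leaf s u : path (uadj A) u s -> u != a -> last u s != a ->
  exists s', [/\ size s' <= size s, path (uadj A) u s', last u s' = last u s
                & a \notin s'].
Proof.
elim: {s}(size s).+1 {-2}s (ltnSn (size s)) => // n IH s.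
case: (boolP (a \in s)) => [as_ | nas] ltsn; last by exists s.
case/splitPr: as_ ltsn => s1 [|x s2]; first by rewrite last_cat /= eqxx.
rewrite cat_path /= last_cat /= size_cat /= => ltsn /and4P[ps1 adj1 adjx ps2] ua la.
have last1 : last u s1 = p by apply: leaf_a; rewrite uadjC.
have xp : x = p by apply: leaf_a.
have [|||s' [sz ps ls nas']] := IH (s1 ++ s2) _ _ ua.
- by rewrite size_cat; lia.
- by rewrite cat_path ps1 last1 -xp.
- by rewrite last_cat last1 -xp.
exists s'; split => //; last by rewrite ls last_cat last1 xp.
by rewrite (leq_trans sz) // !size_cat /=; lia.
Qed.

Variable q : V.

Lemma path_swap s u : u != a -> a \notin s ->
  path (uadj A) u s -> path (uadj (swap A a p q)) u s.
Proof.
elim: s u => //= y s IH u ua; rewrite inE negb_or eq_sym => /andP[ya nas].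
case/andP=> adj ps; rewrite IH // andbT.
move: adj; rewrite /uadj /swap !xpair_eqE (negbTE ua) (negbTE ya) /=.
by rewrite !andbT !orbF.
Qed.

Lemma dist_swap_leaf b y : a != b -> q != a ->
  (forall x, uadj A b x -> x = q) -> y != a -> y != b ->
  dist (swap A a p q) a y <= dist A b y.
Proof.
move=> ab qa leaf_b ya yb.
case: (dist_spec A b y) => [-> | [wby ltV]]; first exact: dist_le_max.
case/walkbP: wby => s [sz ps ls].
have ba : b != a by rewrite eq_sym.
have := path_avoid_leaf ps ba; rewrite ls => /(_ ya) [s' [sz' ps' ls' nas']].
case: s' => [|x s''] in sz' ps' ls' nas' *; first by rewrite -ls' eqxx in yb.
case/andP: ps' => /leaf_b xq ps''; subst x.
rewrite inE negb_or in nas'; case/andP: nas' => _ nas''.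
have le_sz : size (q :: s'') <= dist A b y by rewrite -sz.
apply: leq_trans (dist_le_walk _ (leq_ltn_trans le_sz ltV)) le_sz.
apply/walkbP; exists (q :: s''); split => //=.
by rewrite path_swap // andbT /uadj /swap !eqxx !orbT.
Qed.

Lemma dist_swap_le2 b : a != b -> A b q -> 2 < #|V| ->
  dist (swap A a p q) a b <= 2.
Proof.
move=> ab Abq V2; apply: dist_le_walk V2; apply/walkbP; exists [:: q; b].
split=> //=; rewrite /uadj /swap !eqxx Abq !xpair_eqE [b == a]eq_sym.
by rewrite (negbTE ab) /= !orbT.
Qed.

End Leaf.
End Distances.

Lemma ltn_weighted_sum (I : finType) (w f g : I -> nat) j :
  0 < w j -> (forall i, f i <= g i) -> f j < g j ->
  \sum_i w i * f i < \sum_i w i * g i.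
Proof.
move=> wj fg ltj; rewrite (bigD1 j) // [X in _ < X](bigD1 j) //= -addSn.
by apply: leq_add; rewrite ?ltn_pmul2l // leq_sum // => i _; rewrite leq_mul2l fg orbT.
Qed.

Section FarRichLeaves.
Variables (V : finType) (A : rel V) (a b p q : V).
Hypotheses (Aap : A a p) (pa : p != a) (leaf_a : forall x, uadj A a x -> x = p).
Hypotheses (Abq : A b q) (leaf_b : forall x, uadj A b x -> x = q).
Hypothesis far : 2 < dist A a b.

Let no_short_walk k : k <= 2 -> k < #|V| -> walkb A k a b -> False.
Proof.
move=> k2 kV /dist_le_walk /(_ kV) dk.
by have := leq_ltn_trans (leq_trans dk k2) far; rewrite ltnn.
Qed.

Lemma far_rich_leaves_neq : [/\ a != b, p != b, q != a & p != q].
Proof.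
have ab : a != b by apply: contraTneq far => ->; rewrite dist_xx.
have V1 : 1 < #|V| by apply/card_gt1P; exists a, b.
have [pb qa] : p != b /\ q != a.
  split; apply/eqP => e; apply: (@no_short_walk 1) V1 _ => //; apply/walkbP;
    by exists [:: b]; rewrite /= /uadj -e ?Aap ?Abq ?orbT.
split=> //; apply/eqP => pq.
have V2 : 2 < #|V| by apply/card_gt2P; exists a, b, p; rewrite ab eq_sym pb pa.
apply: (@no_short_walk 2) V2 _ => //; apply/walkbP.
by exists [:: p; b]; rewrite /= /uadj Aap pq Abq orbT.
Qed.

Lemma far_rich_leaves_card : 2 < #|V|.
Proof.
have [ab pb _ _] := far_rich_leaves_neq.
by apply/card_gt2P; exists a, b, p; rewrite ab eq_sym pb pa.
Qed.

Lemma far_rich_leaf_nonarc : ~~ A a q.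
Proof.
have [_ _ _ pq] := far_rich_leaves_neq.
by apply: contra pq => Aaq; rewrite (leaf_a (x := q)) ?/uadj ?Aaq.
Qed.

Let A_a := swap A a p q.
Let A_b := swap A b q p.

Lemma dist_swap_pair_le y :
  dist A_a a y + dist A_b b y <= dist A a y + dist A b y.
Proof.
have [ab pb qa _] := far_rich_leaves_neq.
have ba : b != a by rewrite eq_sym.
have le2 d : d <= 2 -> d <= dist A a b by move/leq_ltn_trans/(_ far)/ltnW.
have card2 := far_rich_leaves_card.
have [-> | ya] := eqVneq y a.
  by rewrite !dist_xx !add0n [dist A b a]distC le2 ?dist_swap_le2.
have [-> | yb] := eqVneq y b.
  by rewrite !dist_xx !addn0 le2 ?dist_swap_le2.
by rewrite addnC leq_add ?(dist_swap_leaf leaf_a) ?(dist_swap_leaf leaf_b).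
Qed.

Lemma dist_swap_pair_lt :
  dist A_a a a + dist A_b b a < dist A a a + dist A b a.
Proof.
have [ab _ _ _] := far_rich_leaves_neq.
rewrite !dist_xx !add0n [dist A b a]distC (leq_ltn_trans _ far) //.
by rewrite dist_swap_le2 1?eq_sym ?far_rich_leaves_card.
Qed.

Lemma cost_swap_pair_lt (w : V -> nat) : 0 < w a ->
  cost A_a w a + cost A_b w b < cost A w a + cost A w b.
Proof.
move=> wa; rewrite /cost -!big_split /=.
rewrite (eq_bigr (fun y => w y * (dist A_a a y + dist A_b b y))) => [|y _];
  last by rewrite mulnDr.
rewrite [X in _ < X](eq_bigr (fun y => w y * (dist A a y + dist A b y))) => [|y _];
  last by rewrite mulnDr.
exact: ltn_weighted_sum wa dist_swap_pair_le dist_swap_pair_lt.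
Qed.

End FarRichLeaves.

Theorem mainTheorem20 (V : finType) (A : rel V) (w : V -> nat)
  (Hloop : forall v : V, ~~ A v v)
  (Hw : forall v : V, 0 < w v)
  (Heq : weak_equilibrium A w) :
  forall a b : V, rich_leaf A a -> rich_leaf A b -> dist A a b <= 2.
Proof.
move=> a b /rich_leafP[p [Aap pa leaf_a]] /rich_leafP[q [Abq qb leaf_b]].
rewrite leqNgt; apply/negP => far.
have far' : 2 < dist A b a by rewrite distC.
have [_ pb qa _] := far_rich_leaves_neq Aap pa Abq far.
have := cost_swap_pair_lt Aap pa leaf_a Abq leaf_b far (Hw a).
rewrite ltnNge leq_add ?Heq //.
- exact: far_rich_leaf_nonarc Aap pa leaf_a Abq far.
- exact: far_rich_leaf_nonarc Abq qb leaf_b Aap far'.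
Qed.
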